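(* Let $A$ and $B$ be layouts. Then $\Phi_A=\Phi_B$ if and only if $\mathrm{coal}(A)=\mathrm{coal}(B)$.
   Context: A nested tuple is an integer or a finite tuple of nested tuples; its flattening is the tuple of its integer leaves left to right. A layout is $L=S:D$ with $S$ (positive integers) and $D$ (nonnegative integers) nested tuples of the same nesting pattern; its flattening is the flat layout $L^\flat=S^\flat:D^\flat$. For a flat layout $(s_1,\dots,s_m):(d_1,\dots,d_m)$ the layout function is $\Phi(x)=\sum_ix_id_i$ with $x_i=\lfloor x/(s_1\cdots s_{i-1})\rfloor\bmod s_i$ on $[0,s_1\cdots s_m)$; for a layout, $\Phi_L=\Phi_{L^\flat}$. For a flat layout, $\mathrm{squeeze}$ removes modes with $s_i=1$, and $\mathrm{coal}^\flat$ is obtained from the squeeze by repeatedly replacing adjacent modes $s_i,s_{i+1}:d_i,d_{i+1}$ with $d_{i+1}=s_id_i$ by $s_is_{i+1}:d_i$. For a layout $L$ with $\mathrm{coal}^\flat(L^\flat)=(s_1,\dots,s_m):(d_1,\dots,d_m)$: $\mathrm{coal}(L)$ is this flat (depth-one) layout if $m>1$, the depth-zero layout $s_1:d_1$ if $m=1$, and $1:0$ if $m=0$. *)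

From mathcomp Require Import all_boot.
Set Implicit Arguments. Unset Strict Implicit. Unset Printing Implicit Defensive.

Inductive ntup : Type :=
| Leaf of nat
| Node of list ntup.

Fixpoint flat (t : ntup) : seq nat :=
  match t with
  | Leaf n => [:: n]
  | Node l => (fix flatl (l : list ntup) : seq nat :=
                 match l with
                 | nil => [::]
                 | cons u l' => flat u ++ flatl l'
                 end) l
  end.

Fixpoint congruent (t u : ntup) : bool :=
  match t, u with
  | Leaf _, Leaf _ => true
  | Node l, Node l' =>
      (fix congl (l l' : list ntup) : bool :=
         match l, l' with
         | nil, nil => true
         | cons a l1, cons b l2 => congruent a b && congl l1 l2
         | _, _ => false
         end) l l'
  | _, _ => false
  end.

Definition layout := (ntup * ntup)%type.
Definition shape (L : layout) : ntup := L.1.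
Definition stride (L : layout) : ntup := L.2.

Definition is_layout (L : layout) : bool :=
  congruent (shape L) (stride L) && all (fun s => 0 < s) (flat (shape L)).

Definition flat_layout := (seq nat * seq nat)%type.

Definition flatten_layout (L : layout) : flat_layout :=
  (flat (shape L), flat (stride L)).

Definition fsize (F : flat_layout) : nat := \prod_(s <- F.1) s.

Definition fphi (F : flat_layout) (x : nat) : nat :=
  \sum_(i < size F.1)
     ((x %/ \prod_(j < i) nth 1 F.1 j) %% nth 1 F.1 i) * nth 0 F.2 i.

Definition lsize (L : layout) : nat := fsize (flatten_layout L).
Definition Phi (L : layout) : nat -> nat := fphi (flatten_layout L).

Definition same_layout_function (A B : layout) : Prop :=
  lsize A = lsize B /\ forall x, x < lsize A -> Phi A x = Phi B x.

Definition modes (F : flat_layout) : seq (nat * nat) := zip F.1 F.2.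

Definition squeeze (ms : seq (nat * nat)) : seq (nat * nat) :=
  [seq m <- ms | m.1 != 1].

(* Repeatedly replace adjacent modes (s_i,d_i),(s_{i+1},d_{i+1}) with
   d_{i+1} = s_i d_i by (s_i s_{i+1}, d_i); performed right to left
   (the result is independent of the order). *)
Fixpoint merge_modes (ms : seq (nat * nat)) : seq (nat * nat) :=
  match ms with
  | [::] => [::]
  | (s, d) :: rest =>
      match merge_modes rest with
      | (s', d') :: r' =>
          if d' == s * d then (s * s', d) :: r' else (s, d) :: (s', d') :: r'
      | [::] => [:: (s, d)]
      end
  end.

Definition coal_flat (F : flat_layout) : seq (nat * nat) :=
  merge_modes (squeeze (modes F)).

Definition coal (L : layout) : layout :=
  match coal_flat (flatten_layout L) with
  | [::] => (Leaf 1, Leaf 0)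
  | [:: (s, d)] => (Leaf s, Leaf d)
  | ms => (Node [seq Leaf m.1 | m <- ms], Node [seq Leaf m.2 | m <- ms])
  end.

(* The layout function of a mode list [(s_1,d_1); ...; (s_m,d_m)] with all
   s_i > 1 determines the list once no two adjacent modes satisfy
   d_{i+1} = s_i d_i: the first stride is Phi(1), and if the first shapes
   differed, say s_1 < s'_1, then Phi(s_1) = d_2 on one side but
   s_1 d_1 on the other, contradicting the merge condition; dividing the
   argument by s_1 then peels off the first mode.  Squeezing and merging
   preserve the layout function and its domain, and produce exactly such a
   list, so coal(A) = coal(B) iff Phi_A = Phi_B. *)
From mathcomp Require Import all_boot.
From mathcomp Require Import zify.
Set Implicit Arguments. Unset Strict Implicit.

Fixpoint flatl (l : list ntup) : seq nat :=
  if l is u :: l' then flat u ++ flatl l' else [::].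

Fixpoint congl (l l' : list ntup) : bool :=
  match l, l' with
  | nil, nil => true
  | cons a l1, cons b l2 => congruent a b && congl l1 l2
  | _, _ => false
  end.

Lemma flat_Node l : flat (Node l) = flatl l.
Proof. by []. Qed.

Lemma congruent_Node l l' : congruent (Node l) (Node l') = congl l l'.
Proof. by []. Qed.

Fixpoint size_flat_congruent (t u : ntup) :
  congruent t u -> size (flat t) = size (flat u).
Proof.
case: t u => [n|l] [m|l'] //; rewrite !flat_Node congruent_Node.
elim: l l' => [|a l IHl] [|b l'] //= /andP [Hab Hl].
by rewrite !size_cat (size_flat_congruent a b Hab) (IHl l' Hl).
Qed.

Fixpoint mphi (ms : seq (nat * nat)) (x : nat) : nat :=
  if ms is (s, d) :: r then x %% s * d + mphi r (x %/ s) else 0.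

Definition msize (ms : seq (nat * nat)) : nat := \prod_(m <- ms) m.1.

Lemma msize_nil : msize [::] = 1.
Proof. by rewrite /msize big_nil. Qed.

Lemma msize_cons s d r : msize ((s, d) :: r) = s * msize r.
Proof. by rewrite /msize big_cons. Qed.

Lemma mphi0 ms : mphi ms 0 = 0.
Proof. by elim: ms => [|[s d] r IH] //=; rewrite mod0n div0n IH. Qed.

Lemma mphi_consM s d r y : 0 < s -> mphi ((s, d) :: r) (s * y) = mphi r y.
Proof. by move=> s_gt0 /=; rewrite mulKn // modnMr. Qed.

Lemma fphi_zip (a b : seq nat) x :
  size a = size b -> fphi (a, b) x = mphi (zip a b) x.
Proof.
elim: a b x => [|s a IH] [|d b] x //=; first by rewrite /fphi big_ord0.
case=> /IH <-; rewrite /fphi /= big_ord_recl /= big_ord0 divn1.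
by congr (_ + _); apply: eq_bigr => i _; rewrite big_ord_recl divnMA.
Qed.

Lemma fsize_zip (a b : seq nat) :
  size a = size b -> fsize (a, b) = msize (zip a b).
Proof.
move=> eq_ab; rewrite /fsize /msize -(big_map fst xpredT id).
by have := unzip1_zip (s:=a) (t:=b); rewrite /unzip1 => -> //; rewrite eq_ab.
Qed.

Lemma mphi_squeeze ms x : mphi (squeeze ms) x = mphi ms x.
Proof.
elim: ms x => [|[s d] r IH] x //=.
by case: eqP => [->|_] /=; rewrite IH // modn1 divn1.
Qed.

Lemma msize_squeeze ms : msize (squeeze ms) = msize ms.
Proof.
rewrite /msize /squeeze big_filter [RHS](bigID (fun m => m.1 != 1)) /=.
by rewrite [X in _ * X]big1 ?muln1 // => m /negbNE /eqP.
Qed.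

Definition all_gt1 (ms : seq (nat * nat)) : bool := all (fun m => 1 < m.1) ms.

Lemma all_gt1_squeeze (a b : seq nat) :
  all (fun s => 0 < s) a -> all_gt1 (squeeze (zip a b)).
Proof.
elim: a b => [|s a IH] [|d b] //= /andP [s_gt0 a_gt0].
by case: eqP => /= [_|s_neq1]; rewrite IH // andbT; lia.
Qed.

Lemma msize_gt0 ms : all_gt1 ms -> 0 < msize ms.
Proof.
elim: ms => [|[s d] r IH] /=; first by rewrite msize_nil.
by case/andP=> s_gt1 /IH; rewrite msize_cons muln_gt0 => ->; rewrite andbT ltnW.
Qed.

Definition mergeable (m m' : nat * nat) : bool := m'.2 == m.1 * m.2.

Definition coalesced (ms : seq (nat * nat)) : bool :=
  sorted (fun m m' => ~~ mergeable m m') ms.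

Lemma modnM_split x s s' : x %% (s * s') = x %% s + s * (x %/ s %% s').
Proof.
rewrite modn_divl (mulnC s') {1}(divn_eq (x %% (s * s')) s).
by rewrite modn_dvdm ?dvdn_mulr // addnC mulnC.
Qed.

Lemma mphi_fuse s d s' r x :
  mphi ((s, d) :: (s', s * d) :: r) x = mphi ((s * s', d) :: r) x.
Proof. by rewrite /= modnM_split divnMA mulnDl addnA mulnCA mulnA. Qed.

Lemma mphi_merge ms x : mphi (merge_modes ms) x = mphi ms x.
Proof.
elim: ms x => [|[s d] r IH] x //=; rewrite -IH.
case: (merge_modes r) => [|[s' d'] r'] //.
by case: eqP => [->|_] //; rewrite -mphi_fuse.
Qed.

Lemma msize_merge ms : msize (merge_modes ms) = msize ms.
Proof.
elim: ms => [|[s d] r IH] //=; rewrite msize_cons -IH.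
case: (merge_modes r) => [|[s' d'] r']; first by rewrite msize_cons.
by case: ifP => _; rewrite !msize_cons // mulnA.
Qed.

Lemma all_gt1_merge ms : all_gt1 ms -> all_gt1 (merge_modes ms).
Proof.
rewrite /all_gt1; elim: ms => [|[s d] r IH] //= /andP [s_gt1 /IH].
case: (merge_modes r) => [|[s' d'] r'] /=; first by rewrite s_gt1.
case/andP=> s'_gt1 r'_gt1; case: ifP => _ /=.
  by rewrite r'_gt1 andbT; nia.
by rewrite s_gt1 s'_gt1.
Qed.

Lemma coalesced_merge ms : coalesced (merge_modes ms).
Proof.
elim: ms => [|[s d] r IH] //=; move: IH.
case: (merge_modes r) => [|[s' d'] r'] //=.
case: eqP => [->|/eqP neq_d] /=; last by rewrite /mergeable neq_d.
case: r' => [|[s'' d''] r''] //=.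
by rewrite /mergeable /= mulnA [s' * s]mulnC.
Qed.

Lemma coal_flat_spec (A : layout) : is_layout A ->
  let ms := coal_flat (flatten_layout A) in
  [/\ all_gt1 ms, coalesced ms, msize ms = lsize A
    & forall x, mphi ms x = Phi A x].
Proof.
case/andP=> /size_flat_congruent eq_size shape_gt0.
split; first by apply/all_gt1_merge/all_gt1_squeeze.
- exact: coalesced_merge.
- by rewrite msize_merge msize_squeeze /lsize fsize_zip.
- by move=> x; rewrite mphi_merge mphi_squeeze /Phi fphi_zip.
Qed.

Lemma coalesced_head_shape s1 d r1 s2 r2 :
  1 < s1 -> all_gt1 r1 -> coalesced ((s1, d) :: r1) -> s1 < s2 ->
  s1 * msize r1 = s2 * msize r2 -> 0 < msize r2 ->
  mphi ((s1, d) :: r1) s1 != mphi ((s2, d) :: r2) s1.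
Proof.
move=> s1_gt1 + + lt_s12 eq_size r2_gt0.
case: r1 eq_size => [|[s' d'] r'] eq_size.
  by move: eq_size; rewrite msize_nil; nia.
case/andP=> s'_gt1 _ /andP [/eqP /= neq_d _].
rewrite /= modnn divnn (ltnW s1_gt1) !modn_small // !divn_small //= !mphi0.
by apply/eqP; lia.
Qed.

Lemma coalesced_mphi_inj ms1 ms2 :
  all_gt1 ms1 -> all_gt1 ms2 -> coalesced ms1 -> coalesced ms2 ->
  msize ms1 = msize ms2 ->
  (forall x, x < msize ms1 -> mphi ms1 x = mphi ms2 x) -> ms1 = ms2.
Proof.
elim: ms1 ms2 => [|[s1 d1] r1 IH] [|[s2 d2] r2] //.
- move=> _ /andP [/= s2_gt1 /msize_gt0 r2_gt0] _ _.
  by rewrite msize_nil msize_cons => eq_size; nia.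
- move=> /andP [/= s1_gt1 /msize_gt0 r1_gt0] _ _ _.
  by rewrite msize_nil msize_cons => eq_size; nia.
move=> /= /andP [s1_gt1 A1] /andP [s2_gt1 A2] C1 C2.
rewrite !msize_cons => eq_size eq_phi.
have P1 := msize_gt0 A1; have P2 := msize_gt0 A2.
have eq_d : d1 = d2.
  move: (eq_phi 1); rewrite /= !modn_small // !divn_small // !mphi0.
  by rewrite !addn0 !mul1n; apply; nia.
subst d2.
have eq_s : s1 = s2.
  case: (ltngtP s1 s2) => // lt_s.
  - move: (coalesced_head_shape s1_gt1 A1 C1 lt_s eq_size P2) => /=.
    by rewrite eq_phi ?eqxx //; nia.
  - move: (coalesced_head_shape s2_gt1 A2 C2 lt_s (esym eq_size) P1) => /=.
    by rewrite eq_phi ?eqxx //; nia.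
subst s2.
have eq_size' : msize r1 = msize r2.
  by apply/eqP; rewrite -(eqn_pmul2l (ltnW s1_gt1)) eq_size.
have C1' : coalesced r1 := path_sorted C1.
have C2' : coalesced r2 := path_sorted C2.
rewrite (IH r2) // => y lt_y.
rewrite -(mphi_consM d1 r1 y (ltnW s1_gt1)) -(mphi_consM d1 r2 y (ltnW s1_gt1)).
by apply: eq_phi; rewrite ltn_pmul2l // ltnW.
Qed.

Definition layout_of_modes (ms : seq (nat * nat)) : layout :=
  match ms with
  | [::] => (Leaf 1, Leaf 0)
  | [:: (s, d)] => (Leaf s, Leaf d)
  | ms => (Node [seq Leaf m.1 | m <- ms], Node [seq Leaf m.2 | m <- ms])
  end.

Lemma coalE L : coal L = layout_of_modes (coal_flat (flatten_layout L)).
Proof. by rewrite /coal; case: (coal_flat _) => [|[s d] [|[s2 d2] r]]. Qed.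

Lemma Leaf_inj : injective Leaf.
Proof. by move=> x y []. Qed.

Lemma layout_of_modes_inj ms1 ms2 : all_gt1 ms1 -> all_gt1 ms2 ->
  layout_of_modes ms1 = layout_of_modes ms2 -> ms1 = ms2.
Proof.
case: ms1 => [|[s1 d1] [|[s1' d1'] r1]];
  case: ms2 => [|[s2 d2] [|[s2' d2'] r2]] //=.
- by move=> _ /andP [s2_gt1 _] [eq_s _]; rewrite -eq_s in s2_gt1.
- by move=> /andP [s1_gt1 _] _ [eq_s _]; rewrite eq_s in s1_gt1.
- by move=> _ _ [-> ->].
move=> _ _ [-> -> eq_shapes -> -> eq_strides].
rewrite -(zip_unzip r1) -(zip_unzip r2); congr [:: _, _ & zip _ _].
  by apply: (inj_map Leaf_inj); rewrite -!map_comp.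
by apply: (inj_map Leaf_inj); rewrite -!map_comp.
Qed.

Theorem mainTheorem16 (A B : layout) :
  is_layout A -> is_layout B ->
  (same_layout_function A B <-> coal A = coal B).
Proof.
move=> /coal_flat_spec [GA CA SA PA] /coal_flat_spec [GB CB SB PB].
rewrite !coalE; split.
- move=> [eq_size eq_phi]; congr layout_of_modes.
  apply: coalesced_mphi_inj => //; first by rewrite SA SB.
  by move=> x lt_x; rewrite PA PB; apply: eq_phi; rewrite -SA.
- move=> /(layout_of_modes_inj GA GB) eq_ms; split.
  + by rewrite -SA -SB eq_ms.
  + by move=> x _; rewrite -PA -PB eq_ms.
Qed.
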